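(* Let $G$ be a paratopological group with binary operation $\star$, let $\kappa$ be a regular uncountable cardinal, and let $T\subset G$ be a subspace of $G$ which is a stationary subset of $\kappa$ (that is, $T$ is identified with a stationary subset of $\kappa$, and the topology $T$ inherits from $G$ is the order topology of $T$ as a subspace of $\kappa$). Then one can choose a subset $S\subset T$ that is closed in $T$ and unbounded in $\kappa$, an ordinal $\lambda\in T$, and a set $L\subset [0,\lambda]_T=\{t\in T: t\le\lambda\}$ such that: (1) $\lambda\in L$; (2) $\lambda$ is a limit point of $L$; (3) the map $L\times S\to G$, $(x,y)\mapsto x\star y$, is injective.
   Context: All spaces are Tychonoff. A paratopological group is a group endowed with a topology for which the group multiplication $G\times G\to G$ is (jointly) continuous. Ordinals and their subsets carry the order topology and the subspace topology respectively. A subset of a regular uncountable cardinal $\kappa$ is stationary if it meets every closed unbounded subset of $\kappa$. *)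

From HB Require Import structures.
From mathcomp Require Import all_boot all_order all_algebra.
From mathcomp Require Import all_classical all_reals all_analysis.
Set Implicit Arguments. Unset Strict Implicit. Unset Printing Implicit Defensive.
Import Order.TTheory.
Local Open Scope classical_set_scope.
Local Open Scope order_scope.

(* kappa is represented by a totally ordered type K (its elements are the
   ordinals < kappa).  The conditions below characterize K, up to order
   isomorphism, as a regular uncountable cardinal:
   - the order is a well-order;
   - K is an initial ordinal: every proper initial segment [0,x) has
     strictly smaller cardinality than K;
   - regularity (cf kappa = kappa): every unbounded subset has cardinality
     of K;
   - uncountability. *)

Definition unbounded {d} {K : orderType d} (A : set K) :=
  forall a : K, exists x, A x /\ a <= x.

Definition regular_uncountable_cardinal {d} (K : orderType d) : Prop :=
  [/\ well_founded (fun x y : K => x < y),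
      (forall x : K, ~ ([set: K] #<= [set y | y < x])%card),
      (forall A : set K, unbounded A -> ([set: K] #<= A)%card) &
      ~ ([set: K] #<= [set: nat])%card].

(* lower bound None = -infinity, upper bound None = +infinity *)
Definition above_lo {d} {K : orderType d} (a : option K) (x : K) :=
  match a with None => true | Some a => a < x end.
Definition below_hi {d} {K : orderType d} (b : option K) (x : K) :=
  match b with None => true | Some b => x < b end.

Definition ointerval {d} {K : orderType d} (a b : option K) : set K :=
  [set x | above_lo a x /\ below_hi b x].

Definition ord_open {d} {K : orderType d} (U : set K) :=
  forall x, U x -> exists a b, ointerval a b x /\ ointerval a b `<=` U.

Definition ord_closed {d} {K : orderType d} (C : set K) := ord_open (~` C).

Definition sub_open {d} {K : orderType d} (T W : set K) :=
  exists U, ord_open U /\ W = U `&` T.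

Definition sub_closed {d} {K : orderType d} (T S : set K) :=
  S `<=` T /\ sub_open T (T `\` S).

Definition sub_limit_point {d} {K : orderType d} (T L : set K) (lam : K) :=
  forall U, sub_open T U -> U lam -> exists x, L x /\ x <> lam /\ U x.

Definition stationary {d} {K : orderType d} (T : set K) :=
  forall C : set K, ord_closed C -> unbounded C -> exists x, C x /\ T x.

Definition is_group {G : Type} (mul : G -> G -> G) (one : G) (inv : G -> G) :=
  [/\ forall x y z, mul x (mul y z) = mul (mul x y) z,
      forall x, mul one x = x, forall x, mul x one = x,
      forall x, mul (inv x) x = one & forall x, mul x (inv x) = one].

Definition paratopological_group {G : topologicalType}
  (mul : G -> G -> G) (one : G) (inv : G -> G) :=
  is_group mul one inv /\ continuous (fun p : G * G => mul p.1 p.2).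

Definition tychonoff_space (G : topologicalType) :=
  accessible_space G /\ completely_regular_space G.

(* e identifies the subset T of K with a subspace of G: e is injective on T
   and the topology that e(T) inherits from G corresponds to the subspace
   (order) topology of T in K. *)
Definition subspace_embedding {d} {K : orderType d} {G : topologicalType}
  (T : set K) (e : K -> G) :=
  (forall x y, T x -> T y -> e x = e y -> x = y) /\
  (forall W, W `<=` T -> (sub_open T W <-> exists O : set G, open O /\ e @` W = O `&` e @` T)).

From HB Require Import structures.
From mathcomp Require Import all_boot all_order all_algebra.
From mathcomp Require Import all_classical all_reals all_analysis.
Set Implicit Arguments.
Unset Strict Implicit.
Unset Printing Implicit Defensive.
Import Order.TTheory.
Local Open Scope classical_set_scope.
Local Open Scope order_scope.

(* Only the cancellation laws of the group and the injectivity of [e] on [T]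
   matter.  Put [L := T ∩ [0, lam]] for a point [lam] of [T] that is a limit of
   [T].  Since [kappa] is regular and [|L| < kappa], for each [a] the set of
   [y ∈ T] solving [x1 y = x2 y'] with [x1, x2 ∈ L] and [y' <= a] is bounded,
   say by [h a]; this is a union of fewer than [kappa] sets with at most one
   point each.  The closure points of [h] form a club, and its trace [S] on
   the stationary set [T] is unbounded: if [y < y'] in [S] and [x1 y = x2 y'],
   then [y' < h y <= y'].  Points like [lam] exist because the limits of [T]
   also form a club. *)

Lemma wf_ex_least d (K : orderType d) : well_founded (fun x y : K => x < y) ->
  forall P : K -> Prop, (exists x, P x) -> exists x, P x /\ forall y, P y -> x <= y.
Proof.
move=> wf P [x0 Px0]; apply: contrapT => noleast.
suff nP x : ~ P x by exact: nP Px0.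
elim/(well_founded_ind wf): x => x IH Px; apply: noleast; exists x; split=> // y Py.
by rewrite leNgt; apply/negP => yx; exact: IH y yx Py.
Qed.

Section RegularCardinal.
Context {d : Order.disp_t} {K : orderType d}.

Definition bounded (A : set K) := exists c, forall y, A y -> y < c.

Definition club (C : set K) := ord_closed C /\ unbounded C.

Definition closure_points (h : K -> K) := [set b | forall a, a < b -> h a <= b].

Lemma ord_closedT : ord_closed [set: K].
Proof. by move=> x /= []. Qed.

Lemma unboundedT : unbounded [set: K].
Proof. by move=> a; exists a. Qed.

Lemma club_setI_ge (C : set K) (a : K) : club C -> club (C `&` [set x | a <= x]).
Proof.
move=> [cC uC]; split.
  move=> x /= notCx; case: (pselect (C x)) => Cx.
    have xa : x < a by rewrite ltNge; apply/negP => ax; exact: notCx.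
    exists None, (Some a); split=> //= z [_ za] [_ az].
    by move: za; rewrite /= ltNge az.
  have [a' [b' [Ix IC]]] := cC x Cx.
  by exists a', b'; split=> // z Iz [Cz _]; exact: IC z Iz Cz.
move=> b; have [x [Cx]] := uC (Order.max a b).
by rewrite ge_max => /andP[ax bx]; exists x.
Qed.

Lemma stationary_setI_unbounded (T C : set K) :
  stationary T -> club C -> unbounded (C `&` T).
Proof.
move=> sT clC a; have [cCa uCa] := club_setI_ge a clC.
by have [x [[Cx ax] Tx]] := sT _ cCa uCa; exists x.
Qed.

Lemma stationary_unbounded (T : set K) : stationary T -> unbounded T.
Proof.
move=> sT a.
by have [x [[_ Tx] ax]] := stationary_setI_unbounded sT (conj ord_closedT unboundedT) a; exists x.
Qed.

Lemma sub_closed_setI (T C : set K) : ord_closed C -> sub_closed T (C `&` T).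
Proof.
move=> cC; split; first by move=> x [].
exists (setC C); split=> //; apply/seteqP; split=> x /=.
  by move=> [Tx nCTx]; split=> // Cx; exact: nCTx.
by move=> [nCx Tx]; split=> // -[].
Qed.

Lemma sub_limit_point_segment (T : set K) (lam t0 : K) :
  (forall a, a < lam -> exists x, T x /\ a < x /\ x < lam) -> t0 < lam ->
  sub_limit_point T [set t | T t /\ t <= lam] lam.
Proof.
move=> limT t0lam _ [U [oU ->]] [Ulam _].
have [a [b [[alam lamb] IU]]] := oU lam Ulam.
have [x [Tx [ax xlam]]] : exists x, T x /\ above_lo a x /\ x < lam.
  case: a alam {IU} => [a|] /= alam; first exact: limT.
  by have [x [Tx [_ xlam]]] := limT t0 t0lam; exists x.
exists x; split; first by split=> //; exact: ltW.
split; first by move=> xE; rewrite xE ltxx in xlam.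
split=> //; apply: IU; split=> //.
by case: b lamb => [b|] //= lamb; exact: lt_trans xlam lamb.
Qed.

Hypothesis hK : regular_uncountable_cardinal K.

Lemma bounded_of_card_lt (A : set K) : ~ ([set: K] #<= A)%card -> bounded A.
Proof.
case: hK => _ _ reg _ small; apply: contrapT => unb; apply: small; apply: reg => a.
apply: contrapT => noabove; apply: unb; exists a => y Ay.
by rewrite ltNge; apply/negP => ay; apply: noabove; exists y.
Qed.

Lemma bounded_card_le (A B : set K) : bounded B -> (A #<= B)%card -> bounded A.
Proof.
case: hK => _ init _ _ [b Bb] AB; apply: bounded_of_card_lt => KA.
apply: (init b); apply: (card_le_trans KA); apply: (card_le_trans AB).
exact: subset_card_le.
Qed.

Lemma countable_bounded (A : set K) : countable A -> bounded A.
Proof. by case: hK => _ _ _ unc cA; apply: bounded_of_card_lt => KA; exact/unc/(card_le_trans KA). Qed.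

Lemma ex_gt (x : K) : exists y, x < y.
Proof. by have [c xc] := countable_bounded (countable1 x); exists c; exact: xc. Qed.

Lemma bounded_le (a : K) : bounded [set y | y <= a].
Proof. by have [c ac] := ex_gt a; exists c => y ya; exact: le_lt_trans ya ac. Qed.

Lemma bounded_subsingleton (A : set K) :
  (forall y z, A y -> A z -> y = z) -> bounded A.
Proof.
move=> sA; apply: countable_bounded; have [[y Ay]|noA] := pselect (exists y, A y).
  by apply: sub_countable (countable1 y); apply: subset_card_le => z Az; exact: sA.
by apply: sub_countable (countable0 K); apply: subset_card_le => z Az; apply: noA; exists z.
Qed.

Lemma bounded_bigcup (I : set K) (F : K -> set K) :
  bounded I -> (forall i, I i -> bounded (F i)) -> bounded (\bigcup_(i in I) F i).
Proof.
move=> bI bF.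
have /choice[f fF] : forall i, exists c, I i -> forall y, F i y -> y < c.
  move=> i; case: (pselect (I i)) => Ii; last by have [c _] := ex_gt i; exists c.
  by have [c Fc] := bF i Ii; exists c.
have [c fc] := bounded_card_le bI (card_image_le f I).
by exists c => y [i Ii Fiy]; apply: lt_trans (fF i Ii y Fiy) _; apply: fc; exists i.
Qed.

Lemma ex_lub_seq (u : nat -> K) :
  exists s, (forall n, u n <= s) /\ (forall a, a < s -> exists n, a < u n).
Proof.
have [c uc] := countable_bounded (card_image_le u setT).
case: hK => wf _ _ _.
have [s [us sleast]] : exists s, (forall n, u n <= s) /\
    forall y, (forall n, u n <= y) -> s <= y.
  by apply: (wf_ex_least wf); exists c => n; apply/ltW/uc; exists n.
exists s; split=> // a ltas; apply: contrapT => noabove.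
have : s <= a by apply: sleast => n; rewrite leNgt; apply/negP => aun; apply: noabove; exists n.
by rewrite leNgt ltas.
Qed.

Lemma closure_points_closed (h : K -> K) : ord_closed (closure_points h).
Proof.
move=> b /= notcb.
have [a [ab bha]] : exists a, a < b /\ b < h a.
  apply: contrapT => H; apply: notcb => a ab; rewrite leNgt; apply/negP => bha.
  by apply: H; exists a.
exists (Some a), (Some (h a)); split=> //= z [az zha] cz.
by move: (cz a az); rewrite leNgt; move: zha => /= ->.
Qed.

Lemma closure_points_unbounded (h : K -> K) : unbounded (closure_points h).
Proof.
have /choice[g g_up] : forall b, exists c, b <= c /\ forall a, a < b -> h a < c.
  move=> b; have [c hc] := bounded_card_le (bounded_le b)
    (card_le_trans (card_image_le h [set a | a < b]) (subset_card_le (fun a => @ltW _ _ a b))).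
  exists (Order.max b c); rewrite le_max lexx; split=> // a ab.
  by rewrite lt_max hc ?orbT //; exists a.
move=> a0; pose u n := iter n g a0.
have [s [us sleast]] := ex_lub_seq u.
exists s; split; last exact: us 0%N.
by move=> a /sleast[n aun]; apply/ltW/(lt_le_trans _ (us n.+1)); exact: (g_up (u n)).2.
Qed.

Lemma club_closure_points (h : K -> K) : club (closure_points h).
Proof. by split; [exact: closure_points_closed | exact: closure_points_unbounded]. Qed.

(* With [h a] a point of [T] above [a], the closure points of [h \o h] are
   limits of [T]: the point [h a] lies strictly between [a] and [h (h a)]. *)
Lemma club_limits (T : set K) : unbounded T ->
  exists C, club C /\ forall b, C b -> forall a, a < b -> exists x, T x /\ a < x /\ x < b.
Proof.
move=> uT.
have /choice[h hT] : forall a, exists x, T x /\ a < x.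
  move=> a; have [a' aa'] := ex_gt a; have [x [Tx a'x]] := uT a'.
  by exists x; split=> //; exact: lt_le_trans aa' a'x.
exists (closure_points (h \o h)); split; first exact: club_closure_points.
move=> b cb a ab; exists (h a); split; first exact: (hT a).1.
by split; [exact: (hT a).2 | exact: lt_le_trans (hT (h a)).2 (cb a ab)].
Qed.

End RegularCardinal.

Lemma is_group_mulgI {G : Type} (mul : G -> G -> G) one inv :
  is_group mul one inv -> forall a, injective (mul a).
Proof. by move=> [assoc mul1g _ mulVg _] a b c E; rewrite -(mul1g b) -(mul1g c) -(mulVg a) -!assoc E. Qed.

Lemma is_group_mulIg {G : Type} (mul : G -> G -> G) one inv :
  is_group mul one inv -> forall a, injective (mul^~ a).
Proof. by move=> [assoc _ mulg1 _ mulgV] a b c E; rewrite -(mulg1 b) -(mulg1 c) -(mulgV a) !assoc E. Qed.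

Section Collisions.
Context {G : Type} (mul : G -> G -> G) {d : Order.disp_t} {K : orderType d}.
Variables (T L : set K) (e : K -> G).
Hypothesis hK : regular_uncountable_cardinal K.
Hypothesis mulI : forall a, injective (mul a).
Hypothesis e_inj : forall x y, T x -> T y -> e x = e y -> x = y.
Hypothesis bL : bounded L.

Definition collisions (a : K) := [set y | T y /\ exists x1 x2 y',
  L x1 /\ L x2 /\ y' <= a /\ mul (e x1) (e y) = mul (e x2) (e y')].

Lemma bounded_collisions (a : K) : bounded (collisions a).
Proof.
pose Z x1 x2 y' := [set y | T y /\ mul (e x1) (e y) = mul (e x2) (e y')].
have bZ x1 x2 y' : bounded (Z x1 x2 y').
  apply: (bounded_subsingleton hK) => y z [Ty Ey] [Tz Ez].
  by apply: (e_inj Ty Tz); apply: (@mulI (e x1)); rewrite Ey Ez.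
have: bounded (\bigcup_(x1 in L) \bigcup_(x2 in L) \bigcup_(y' in [set y' | y' <= a]) Z x1 x2 y').
  apply: (bounded_bigcup hK bL) => x1 _; apply: (bounded_bigcup hK bL) => x2 _.
  by apply: (bounded_bigcup hK (bounded_le hK a)) => y' _; exact: bZ.
case=> c Uc; exists c => y [Ty [x1 [x2 [y' [Lx1 [Lx2 [y'a E]]]]]]].
by apply: Uc; exists x1 => //; exists x2 => //; exists y'.
Qed.

Hypothesis mulIr : forall a, injective (mul^~ a).
Hypothesis LT : L `<=` T.

(* A closure point of the bound of [collisions] is too large to collide with
   any smaller point. *)
Lemma club_injective_mul : exists C, club C /\
  forall x1 y1 x2 y2, L x1 -> (C `&` T) y1 -> L x2 -> (C `&` T) y2 ->
    mul (e x1) (e y1) = mul (e x2) (e y2) -> x1 = x2 /\ y1 = y2.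
Proof.
have /choice[h hcol] := bounded_collisions.
have noncollide y1 y2 x1 x2 : y1 < y2 -> closure_points h y2 -> T y2 -> L x1 -> L x2 ->
    mul (e x1) (e y1) <> mul (e x2) (e y2).
  move=> y12 cy2 Ty2 Lx1 Lx2 E; have := hcol y1 y2.
  have /[swap]/[apply] : collisions y1 y2 by split=> //; exists x2, x1, y1.
  by rewrite ltNge cy2.
exists (closure_points h); split; first exact: club_closure_points.
move=> x1 y1 x2 y2 Lx1 [cy1 Ty1] Lx2 [cy2 Ty2].
case: (ltgtP y1 y2) => [y12|y21|<-] E.
- by exfalso; exact: noncollide y12 cy2 Ty2 Lx1 Lx2 E.
- by exfalso; exact: noncollide y21 cy1 Ty1 Lx2 Lx1 (esym E).
- by split=> //; apply: (e_inj (LT Lx1) (LT Lx2)); exact: mulIr E.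
Qed.

End Collisions.

Theorem lemma2p2 (G : topologicalType) (mul : G -> G -> G) (one : G) (inv : G -> G)
  (d : Order.disp_t) (K : orderType d) (T : set K) (e : K -> G) :
  tychonoff_space G ->
  paratopological_group mul one inv ->
  regular_uncountable_cardinal K ->
  subspace_embedding T e ->
  stationary T ->
  exists (S : set K) (lam : K) (L : set K),
    sub_closed T S /\ unbounded S /\ T lam /\
    L `<=` [set t | T t /\ t <= lam] /\
    L lam /\ sub_limit_point T L lam /\
        forall x1 y1 x2 y2, L x1 -> S y1 -> L x2 -> S y2 ->
          mul (e x1) (e y1) = mul (e x2) (e y2) -> x1 = x2 /\ y1 = y2.
Proof.
move=> _ [grp _] hK [e_inj _] sT.
have [t0 _] := sT _ ord_closedT unboundedT.
have [t1 t01] := ex_gt hK t0.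
have [A [clA limA]] := club_limits hK (stationary_unbounded sT).
have [lam [[Alam Tlam] t1lam]] := stationary_setI_unbounded sT clA t1.
pose L := [set t | T t /\ t <= lam].
have bL : bounded L by have [c lamc] := bounded_le hK lam; exists c => y [_ /lamc].
have [C [clC injC]] := club_injective_mul hK (is_group_mulgI grp) e_inj bL
  (is_group_mulIg grp) (fun _ '(conj Tt _) => Tt).
exists (C `&` T), lam, L; split; first exact: sub_closed_setI clC.1.
split; first exact: stationary_setI_unbounded sT clC.
split; first exact: Tlam.
split; first by [].
split; first by split.
split; first exact: sub_limit_point_segment (limA _ Alam) (lt_le_trans t01 t1lam).
exact: injC.
Qed.
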